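(* Let $G$ be a $1$-DCFG in Chomsky normal form, let $T$ be a derivation tree of a word $w\in L(G)$, and let $\pi=(i_1,j_1,k_1,l_1,i_2,j_2,k_2,l_2)$ and $\pi'=(i'_1,j'_1,k'_1,l'_1,i'_2,j'_2,k'_2,l'_2)$ be two $2$-pumps in $T$. Then, after possibly interchanging $\pi$ and $\pi'$, one of the following holds: 1. $l_2\le i'_1$; 2. $i_1\le i'_1\le l'_2\le j_1$ or $k_2\le i'_1\le l'_2\le l_2$; 3. $i_1\le i'_1\le j'_1\le j_1\le k_1\le k'_1\le l'_1\le l_1\le i_2\le i'_2\le j'_2\le j_2\le k_2\le k'_2\le l'_2\le l_2$; 4. $i_1\le i'_1\le j'_1\le k'_1\le j_1\le k_1\le l'_1\le l_1\le i_2\le i'_2\le j_2\le k_2\le j'_2\le k'_2\le l'_2\le l_2$; 5. $i_1\le i'_1\le j_1\le k_1\le j'_1\le k'_1\le l'_1\le l_1\le i_2\le i'_2\le j'_2\le k'_2\le j_2\le k_2\le l'_2\le l_2$; 6. $i_1\le i'_1\le j_1\le j'_1\le k'_1\le k_1\le l'_1\le l_1\le i_2\le i'_2\le j_2\le j'_2\le k'_2\le k_2\le l'_2\le l_2$; 7. $k_1\le i'_1\le l'_1\le l_1\le i_2\le i'_2\le l'_2\le j_2$; 8. $i_1\le i'_1\le l'_1\le j_1\le k_2\le i'_2\le l'_2\le l_2$; 9. $k_1\le i'_1\le l'_2\le l_1$ or $i_2\le i'_1\le l'_2\le j_2$; 10. $j_1\le i'_1\le l'_1\le k_1\le j_2\le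 i'_2\le l'_2\le k_2$; 11. $j_1\le i'_1\le l'_2\le k_1$ or $j_2\le i'_1\le l'_2\le k_2$; 12. $l_1\le i'_1\le l'_2\le i_2$.
   Context: Let $\Sigma$ be a finite alphabet and $1\notin\Sigma$ a separator; $\Sigma_1=\Sigma\cup\{1\}$, $\mathrm{rk}(w)=|w|_1$; for $\mathrm{rk}(u)\ge1$, $u\odot_1 v$ replaces the first occurrence of $1$ in $u$ by $v$. A $1$-DCFG in Chomsky normal form is $G=\langle N,\Sigma,P,S\rangle$ with nonterminals of rank $0$ or $1$, $\mathrm{rk}(S)=0$, and rules of the forms $A\to B\cdot C$ (with $\mathrm{rk}A=\mathrm{rk}B+\mathrm{rk}C\le1$), $A\to B\odot_1 C$ (with $\mathrm{rk}B=1$, $\mathrm{rk}A=\mathrm{rk}C$), where $B,C\in N\setminus\{S\}$, $A\to a$ with $a\in\Sigma_1$ ($\mathrm{rk}A=\mathrm{rk}a$), or $S\to\epsilon$. A derivation tree is a finite rooted ordered tree with nonterminal-labeled nodes, each internal node labeled $A$ having two children $B,C$ and annotated by a rule $A\to B\cdot C$ or $A\to B\odot_1 C$, each leaf labeled $A$ annotated by a rule $A\to a$ or $S\to\epsilon$. The yield of a node is the word of $\Sigma_1^*$ computed bottom-up ($a$ at a leaf with rule $A\to a$, $\epsilon$ for $S\to\epsilon$, concatenation resp. $\odot_1$ of the children's yields at internal nodes); $T$ is a derivation tree of $w$ if its root is labeled $S$ with yield $w$; $L(G)$ is the set of such $w$. The rank of a node is the rank of its label. Let $w=a_1\cdots a_n$;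 each letter of $\Sigma$ occurring in a yield comes from a leaf and thus corresponds to a position of $w$. For a node of rank $1$ its yield has the form $w_11w_2$ where $w_1=a_{i_1}\cdots a_{j_1-1}$ and $w_2=a_{i_2}\cdots a_{j_2-1}$ are contiguous segments of $w$ (as occurrences) with $i_1\le j_1\le i_2\le j_2$; the tuple $(i_1,j_1,i_2,j_2)$ is the constituent of the node. A node $v'$ is a direct descendant of $v$ if $v'$ is a proper descendant of $v$ and all nodes on the path between them (inclusive) have the same rank. A $2$-pump is a pair $(v,v')$ of internal nodes with the same label of rank $1$ such that $v'$ is a direct descendant of $v$; if the constituent of $v$ is $(i_1,l_1,i_2,l_2)$ and that of $v'$ is $(j_1,k_1,j_2,k_2)$, then $i_1\le j_1\le k_1\le l_1\le i_2\le j_2\le k_2\le l_2$ and the pump is identified with the tuple $(i_1,j_1,k_1,l_1,i_2,j_2,k_2,l_2)$. *)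

From mathcomp Require Import all_boot.
Set Implicit Arguments. Unset Strict Implicit. Unset Printing Implicit Defensive.

(** Letters of Sigma_1 = Sigma + {1}: [Some a] is the letter a, [None] is the
    separator 1. *)
Definition sym (Sigma : Type) := option Sigma.

Definition rkw (Sigma : eqType) (w : seq (option Sigma)) : nat :=
  count (fun x => x == None) w.

Definition subst1 (Sigma : eqType) (u v : seq (option Sigma)) :=
  let i := index None u in take i u ++ v ++ drop i.+1 u.

Inductive rule (Sigma N : Type) :=
| RCat of N & N & N            (* A -> B . C *)
| RSub of N & N & N            (* A -> B (.)_1 C *)
| RTerm of N & option Sigma    (* A -> a, a in Sigma_1 *)
| REps.                        (* S -> epsilon *)
Arguments REps {Sigma N}.

Record grammar (Sigma : finType) := Grammar {
  nt : finType;
  rkN : nt -> nat;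
  start : nt;
  prods : rule Sigma nt -> Prop }.
Arguments prods {Sigma} g _.
Arguments start {Sigma} g.
Arguments rkN {Sigma g} _.

Definition cnf (Sigma : finType) (G : grammar Sigma) : Prop :=
  (forall A : nt G, rkN A <= 1) /\ rkN (start G) = 0 /\
  forall r, prods G r ->
    match r with
    | RCat A B C => rkN A = rkN B + rkN C /\ B <> start G /\ C <> start G
    | RSub A B C => rkN B = 1 /\ rkN A = rkN C /\ B <> start G /\ C <> start G
    | RTerm A a => rkN A = (if a is None then 1 else 0)
    | REps => True
    end.

Inductive tree (Sigma N : Type) :=
| Leaf of N & rule Sigma N
| Node of N & rule Sigma N & tree Sigma N & tree Sigma N.

Definition label (Sigma N : Type) (t : tree Sigma N) : N :=
  match t with Leaf A _ => A | Node A _ _ _ => A end.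

Definition internal (Sigma N : Type) (t : tree Sigma N) : bool :=
  if t is Node _ _ _ _ then true else false.

Fixpoint valid_tree (Sigma : finType) (G : grammar Sigma) (t : tree Sigma (nt G))
  : Prop :=
  match t with
  | Leaf A r => prods G r /\
      match r with
      | RTerm A' _ => A' = A
      | REps => A = start G
      | _ => False
      end
  | Node A r tl tr => prods G r /\ valid_tree tl /\ valid_tree tr /\
      match r with
      | RCat A' B C => A' = A /\ B = label tl /\ C = label tr
      | RSub A' B C => A' = A /\ B = label tl /\ C = label tr
      | _ => False
      end
  end.

Fixpoint yield (Sigma : eqType) (N : Type) (t : tree Sigma N) : seq (option Sigma) :=
  match t with
  | Leaf _ r => if r is RTerm _ a then [:: a] else [::]
  | Node _ r tl tr =>
      if r is RSub _ _ _ then subst1 (yield tl) (yield tr)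
      else yield tl ++ yield tr
  end.

Definition derivation (Sigma : finType) (G : grammar Sigma)
  (T : tree Sigma (nt G)) (w : seq Sigma) : Prop :=
  valid_tree T /\ label T = start G /\ yield T = map Some w.

(** Nodes are addressed by paths from the root (false = left child,
    true = right child). *)
Fixpoint subtree (Sigma N : Type) (t : tree Sigma N) (p : seq bool)
  : option (tree Sigma N) :=
  match p, t with
  | [::], _ => Some t
  | b :: p', Node _ _ tl tr => subtree (if b then tr else tl) p'
  | _ :: _, Leaf _ _ => None
  end.

(** Positions in w (0-based).  A span (i1, j1, i2, j2) of a rank-1 node
    says that its yield w1 1 w2 has w1 = w[i1, j1) and w2 = w[i2, j2);
    a rank-0 node with yield w[a, b) gets span (a, b, b, b).  Spans are
    propagated top-down from the root span (0, |w|, |w|, |w|), splitting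
    according to the rule and the lengths of the children's yields. *)
Definition span := (nat * nat * nat * nat)%type.

Definition pre (Sigma : eqType) (x : seq (option Sigma)) := index None x.
Definition post (Sigma : eqType) (x : seq (option Sigma)) :=
  size x - (index None x).+1.

Definition child_spans (Sigma : finType) (G : grammar Sigma)
  (r : rule Sigma (nt G)) (tl tr : tree Sigma (nt G)) (s : span) : span * span :=
  let '(a1, b1, a2, b2) := s in
  let yl := yield tl in
  match r with
  | RSub _ _ _ =>
      let m := a1 + pre yl in
      if rkN (label tr) == 1 then
        ((a1, m, b2 - post yl, b2), (m, b1, a2, b2 - post yl))
      else
        let e := b1 - post yl in ((a1, m, e, b1), (m, e, e, e))
  | _ =>
      if rkN (label tl) == 1 then
        let e := a2 + post yl in ((a1, b1, a2, e), (e, b2, b2, b2))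
      else
        let m := a1 + size yl in
        ((a1, m, m, m),
         if rkN (label tr) == 1 then (m, b1, a2, b2) else (m, b1, b1, b1))
  end.

Fixpoint span_at (Sigma : finType) (G : grammar Sigma)
  (t : tree Sigma (nt G)) (s : span) (p : seq bool) : span :=
  match p, t with
  | [::], _ => s
  | b :: p', Node _ r tl tr =>
      let ss := child_spans r tl tr s in
      if b then span_at tr ss.2 p' else span_at tl ss.1 p'
  | _ :: _, Leaf _ _ => s
  end.

Definition constituent (Sigma : finType) (G : grammar Sigma)
  (T : tree Sigma (nt G)) (p : seq bool) : span :=
  let n := size (yield T) in span_at T (0, n, n, n) p.

Definition direct_desc (Sigma : finType) (G : grammar Sigma)
  (T : tree Sigma (nt G)) (v v' : seq bool) : Prop :=
  exists q tv, q <> [::] /\ v' = v ++ q /\ subtree T v = Some tv /\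
    forall k, k <= size q ->
      exists t, subtree T (v ++ take k q) = Some t /\
                rkN (label t) = rkN (label tv).

Definition pump2 (Sigma : finType) (G : grammar Sigma)
  (T : tree Sigma (nt G)) (v v' : seq bool) : Prop :=
  exists tv tv', subtree T v = Some tv /\ subtree T v' = Some tv' /\
    internal tv /\ internal tv' /\ label tv = label tv' /\
    rkN (label tv) = 1 /\ direct_desc T v v'.

Definition cases12 (i1 j1 k1 l1 i2 j2 k2 l2 i1' j1' k1' l1' i2' j2' k2' l2' : nat)
  : Prop :=
     (l2 <= i1')
  \/ (sorted leq [:: i1; i1'; l2'; j1] \/ sorted leq [:: k2; i1'; l2'; l2])
  \/ (sorted leq [:: i1; i1'; j1'; j1; k1; k1'; l1'; l1;
                     i2; i2'; j2'; j2; k2; k2'; l2'; l2])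
  \/ (sorted leq [:: i1; i1'; j1'; k1'; j1; k1; l1'; l1;
                     i2; i2'; j2; k2; j2'; k2'; l2'; l2])
  \/ (sorted leq [:: i1; i1'; j1; k1; j1'; k1'; l1'; l1;
                     i2; i2'; j2'; k2'; j2; k2; l2'; l2])
  \/ (sorted leq [:: i1; i1'; j1; j1'; k1'; k1; l1'; l1;
                     i2; i2'; j2; j2'; k2'; k2; l2'; l2])
  \/ (sorted leq [:: k1; i1'; l1'; l1; i2; i2'; l2'; j2])
  \/ (sorted leq [:: i1; i1'; l1'; j1; k2; i2'; l2'; l2])
  \/ (sorted leq [:: k1; i1'; l2'; l1] \/ sorted leq [:: i2; i1'; l2'; j2])
  \/ (sorted leq [:: j1; i1'; l1'; k1; j2; i2'; l2'; k2])
  \/ (sorted leq [:: j1; i1'; l2'; k1] \/ sorted leq [:: j2; i1'; l2'; k2])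
  \/ (sorted leq [:: l1; i1'; l2'; i2]).

From mathcomp Require Import all_boot zify.
Set Implicit Arguments. Unset Strict Implicit. Unset Printing Implicit Defensive.

(* Every node of a derivation tree gets a span of the word, passed down from the
   root by [span_at]; by induction it agrees with the yield of the node.  Spans
   then reflect the shape of the tree: a descendant's span lies in the hull of
   its ancestor's span, inside one of its two pieces unless the two nodes are
   joined by a chain of rank-1 nodes, in which case the spans are nested piece
   by piece; and nodes in different subtrees of a common ancestor have
   separated spans, one possibly sitting in the gap of the other.  Comparing
   the tree addresses of the four nodes of two pumps leaves a handful of such
   configurations, each of which forces one of the twelve cases by linear
   arithmetic. *)

Section Words.
Variable S : eqType.
Implicit Types (x y l r : seq (option S)).

Lemma rkw_cat x y : rkw (x ++ y) = rkw x + rkw y.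
Proof. exact: count_cat. Qed.

Lemma rkw1_split x : rkw x = 1 ->
  exists l r, [/\ x = l ++ None :: r, rkw l = 0 & rkw r = 0].
Proof.
rewrite /rkw; elim: x => [|[a|] x IH] //= => [/IH [l [r [-> Hl Hr]]]|[Hx]].
  by exists (Some a :: l), r.
by exists [::], x.
Qed.

Lemma pre_cat0 x y : rkw x = 0 -> pre (x ++ y) = size x + pre y.
Proof. by rewrite /pre /rkw; elim: x => [|[a|] x IH] //= /IH ->. Qed.

Lemma pre_sep l r : rkw l = 0 -> pre (l ++ None :: r) = size l.
Proof. by move=> /pre_cat0 ->; rewrite /pre /= addn0. Qed.

Lemma post_sep l r : rkw l = 0 -> post (l ++ None :: r) = size r.
Proof. by move=> Hl; rewrite /post -/(pre _) pre_sep // size_cat /= addnS subSS addKn. Qed.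

Lemma subst1_sep l r v : rkw l = 0 -> subst1 (l ++ None :: r) v = l ++ v ++ r.
Proof.
move=> Hl; rewrite /subst1 /= -/(pre _) pre_sep //.
by rewrite take_size_cat // drop_cat ltnNge leqnSn subSnn /= drop0.
Qed.

Lemma size_pre_post x : rkw x = 1 -> size x = pre x + post x + 1.
Proof.
by move=> /rkw1_split [l [r [-> Hl _]]]; rewrite pre_sep // post_sep // size_cat /= addn1 addnS.
Qed.

Lemma pre_cat1 x y : rkw x = 1 -> pre (x ++ y) = pre x.
Proof. by move=> /rkw1_split [l [r [-> Hl _]]]; rewrite -catA /= !pre_sep. Qed.

Lemma post_cat1 x y : rkw x = 1 -> rkw y = 0 -> post (x ++ y) = post x + size y.
Proof.
by move=> /rkw1_split [l [r [-> Hl _]]] Hy; rewrite -catA /= !post_sep // size_cat.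
Qed.

Lemma post_cat0 x y : rkw x = 0 -> rkw y = 1 -> post (x ++ y) = post y.
Proof.
move=> Hx /rkw1_split [l [r [-> Hl _]]].
by rewrite catA !post_sep // rkw_cat Hx Hl.
Qed.

Lemma pre_subst1 x y : rkw x = 1 -> rkw y = 1 -> pre (subst1 x y) = pre x + pre y.
Proof.
by move=> /rkw1_split [l [r [-> Hl _]]] Hy; rewrite subst1_sep // pre_cat0 // pre_cat1 // pre_sep.
Qed.

Lemma post_subst1 x y : rkw x = 1 -> rkw y = 1 -> post (subst1 x y) = post y + post x.
Proof.
move=> /rkw1_split [l [r [-> Hl Hr]]] Hy.
by rewrite subst1_sep // post_cat0 ?rkw_cat ?Hy ?Hr // post_cat1 // post_sep.
Qed.

Lemma size_subst1 x y : rkw x = 1 -> size (subst1 x y) = pre x + size y + post x.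
Proof.
by move=> /rkw1_split [l [r [-> Hl _]]]; rewrite subst1_sep // pre_sep // post_sep // !size_cat addnA.
Qed.

End Words.

Section Spans.
Implicit Types s u v w : span.

Definition span_wf s := let '(a, b, c, d) := s in a <= b /\ b <= c /\ c <= d.

Definition nested s v := let '(a, b, c, d) := s in let '(a', b', c', d') := v in
  a <= a' /\ b' <= b /\ c <= c' /\ d' <= d.
Definition within_hull s v := let '(a, _, _, d) := s in let '(a', _, _, d') := v in
  a <= a' /\ d' <= d.
Definition within_left s v := let '(a, b, _, _) := s in let '(a', _, _, d') := v in
  a <= a' /\ d' <= b.
Definition within_right s v := let '(_, _, c, d) := s in let '(a', _, _, d') := v in
  c <= a' /\ d' <= d.
Definition within_gap s v := let '(_, b, c, _) := s in let '(a', _, _, d') := v in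
  b <= a' /\ d' <= c.
Definition precedes s v := let '(_, _, _, d) := s in let '(a', _, _, _) := v in d <= a'.

Definition flat s := let '(_, b, c, d) := s in b = c /\ c = d.

Definition separated s v :=
  precedes s v \/ precedes v s \/ within_gap s v \/ within_gap v s.

Definition pump_spans s s' := [/\ span_wf s, span_wf s' & nested s s'].

Definition desc_span (ra : nat) s v :=
  within_hull s v /\ (ra = 1 -> within_left s v \/ within_right s v \/ nested s v).

Definition child_span (ra rx : nat) s v :=
  within_hull s v /\ (ra = 1 -> rx = 1 -> nested s v) /\
  (ra = 1 -> rx = 0 -> within_left s v \/ within_right s v).

Lemma child_desc_span ra rx s v w :
  child_span ra rx s v -> rx <= 1 -> desc_span rx v w -> desc_span ra s w.
Proof.
move: s v w => [[[? ?] ?] ?] [[[? ?] ?] ?] [[[? ?] ?] ?].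
rewrite /child_span /desc_span /within_hull /within_left /within_right /nested; lia.
Qed.

Lemma nested_trans s u v : nested s u -> nested u v -> nested s v.
Proof. by case: s u v => [[[? ?] ?] ?] [[[? ?] ?] ?] [[[? ?] ?] ?]; rewrite /nested; lia. Qed.

Lemma separated_sym s v : separated s v -> separated v s.
Proof. by rewrite /separated; tauto. Qed.

Lemma desc_span_separated r1 r2 s1 s2 v1 v2 :
  span_wf s1 -> span_wf s2 -> span_wf v1 -> span_wf v2 ->
  (r1 = 1 \/ r1 = 0 /\ flat s1) -> (r2 = 1 \/ r2 = 0 /\ flat s2) ->
  precedes s1 s2 \/ within_gap s1 s2 ->
  desc_span r1 s1 v1 -> desc_span r2 s2 v2 -> separated v1 v2.
Proof.
case: s1 s2 v1 v2 => [[[? ?] ?] ?] [[[? ?] ?] ?] [[[? ?] ?] ?] [[[? ?] ?] ?].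
rewrite /span_wf /flat /precedes /within_gap /desc_span /separated /within_hull
  /within_left /within_right /nested /=; lia.
Qed.

Lemma nested_within_gap s1 s2 v1 v2 :
  within_gap s1 s2 -> nested s1 v1 -> nested s2 v2 -> within_gap v1 v2.
Proof.
by case: s1 s2 v1 v2 => [[[? ?] ?] ?] [[[? ?] ?] ?] [[[? ?] ?] ?] [[[? ?] ?] ?];
  rewrite /within_gap /nested; lia.
Qed.

Definition cases12_sym s s' u u' :=
  let '(i1, l1, i2, l2) := s in let '(j1, k1, j2, k2) := s' in
  let '(i1', l1', i2', l2') := u in let '(j1', k1', j2', k2') := u' in
  cases12 i1 j1 k1 l1 i2 j2 k2 l2 i1' j1' k1' l1' i2' j2' k2' l2' \/
  cases12 i1' j1' k1' l1' i2' j2' k2' l2' i1 j1 k1 l1 i2 j2 k2 l2.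

Lemma cases12_symC s s' u u' : cases12_sym s s' u u' -> cases12_sym u u' s s'.
Proof.
by case: s s' u u' => [[[? ?] ?] ?] [[[? ?] ?] ?] [[[? ?] ?] ?] [[[? ?] ?] ?] /or_comm.
Qed.

Ltac destruct_spans := repeat match goal with
  | s : span |- _ => let a := fresh "a" in let b := fresh "b" in let c := fresh "c" in
      let d := fresh "d" in destruct s as [[[a b] c] d] end.

Ltac split_hyps := repeat match goal with
  | H : ?a = ?a -> _ |- _ => specialize (H erefl)
  | H : _ /\ _ |- _ => destruct H
  | H : and3 _ _ _ |- _ => destruct H
  | H : _ \/ _ |- _ => destruct H
  | H : or4 _ _ _ _ |- _ => destruct H end.

Ltac split_chain := repeat match goal with
  | |- is_true (_ && _) => apply/andP; split end.

Ltac solve_chain := solve [ split_chain; lia ].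

Ltac pick_disjunct := lazymatch goal with
  | |- _ \/ _ => first [ left; pick_disjunct | right; pick_disjunct ]
  | |- _ => solve_chain end.

Ltac solve_cases12 :=
  intros; destruct_spans;
  unfold cases12_sym, cases12, pump_spans, desc_span, separated, span_wf, nested,
    within_hull, within_left, within_right, within_gap, precedes in *; simpl in *;
  split_hyps; pick_disjunct.

Lemma cases12_separated s s' u u' :
  pump_spans s s' -> pump_spans u u' -> separated s u -> cases12_sym s s' u u'.
Proof. solve_cases12. Qed.

Lemma cases12_below_inner s s' u u' :
  pump_spans s s' -> pump_spans u u' -> desc_span 1 s' u -> cases12_sym s s' u u'.
Proof. solve_cases12. Qed.

Lemma cases12_beside_inner s s' u u' :
  pump_spans s s' -> pump_spans u u' -> separated s' u -> desc_span 1 s u ->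
  cases12_sym s s' u u'.
Proof. solve_cases12. Qed.

Lemma cases12_between s s' u u' :
  pump_spans s s' -> pump_spans u u' -> nested s u -> nested u s' ->
  [\/ nested u' s', nested s' u', within_gap u' s' | within_gap s' u'] ->
  cases12_sym s s' u u'.
Proof. solve_cases12. Qed.

End Spans.

Lemma subtree_nil (Sigma N : Type) (t : tree Sigma N) : subtree t [::] = Some t.
Proof. by case: t. Qed.

Lemma subtree_cat (Sigma N : Type) (t : tree Sigma N) p q :
  subtree t (p ++ q) = if subtree t p is Some t1 then subtree t1 q else None.
Proof. by elim: p t => [|b p IH] [A r|A r tl tr] //=; rewrite IH. Qed.

Lemma address_cases (p q : seq bool) :
  [\/ exists r, q = p ++ r, exists r, p = q ++ r |
      exists z b p1 q1, p = z ++ b :: p1 /\ q = z ++ ~~ b :: q1].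
Proof.
elim: p q => [|a p IH] [|c q]; first 1 [by apply: Or31; exists [::]].
- by apply: Or31; exists (c :: q).
- by apply: Or32; exists (a :: p).
case: (eqVneq a c) => [<-|Hac].
  case: (IH q) => [[r ->]|[r ->]|[z [b [p1 [q1 [-> ->]]]]]].
  - by apply: Or31; exists r.
  - by apply: Or32; exists r.
  - by apply: Or33; exists (a :: z), b, p1, q1.
by apply: Or33; exists [::], a, p, q; case: a c Hac => [] [].
Qed.

Section TreeSpans.
Variables (Sigma : finType) (G : grammar Sigma).
Hypothesis HG : cnf G.
Implicit Types t T : tree Sigma (nt G).

Definition yield_span t (s : span) :=
  let '(a, b, c, d) := s in span_wf s /\
  ((rkN (label t) = 1 /\ pre (yield t) = b - a /\ post (yield t) = d - c) \/
   (rkN (label t) = 0 /\ b = c /\ c = d /\ size (yield t) = b - a)).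

Definition valid_span t (s : span) :=
  valid_tree t /\ yield_span t s.

Definition rank1_path T (p r : seq bool) :=
  forall k, k <= size r ->
    exists t, subtree T (p ++ take k r) = Some t /\ rkN (label t) = 1.

Lemma span_at_nil t (s : span) : span_at t s [::] = s.
Proof. by case: t. Qed.

Lemma span_at_cat t t1 (s : span) p q :
  subtree t p = Some t1 -> span_at t s (p ++ q) = span_at t1 (span_at t s p) q.
Proof.
elim: p t s => [|b p IH] t s; first by rewrite subtree_nil span_at_nil => -[->].
by case: t => //= A r tl tr; case: b => /= /IH ->.
Qed.

Lemma rank1_path_sub T t p r :
  subtree T p = Some t -> rank1_path T p r -> rank1_path t [::] r.
Proof. by move=> Hp H k /H; rewrite subtree_cat Hp. Qed.

Lemma rank1_path_cat T p r1 r2 :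
  rank1_path T p (r1 ++ r2) -> rank1_path T p r1 /\ rank1_path T (p ++ r1) r2.
Proof.
move=> H; split=> k Hk.
  by have := H k; rewrite size_cat takel_cat //; apply; apply: leq_trans (leq_addr _ _).
have := H (size r1 + k); rewrite size_cat take_cat ltnNge leq_addr addKn catA.
by apply; rewrite leq_add2l.
Qed.

Lemma rank1_path_root T p r :
  rank1_path T p r -> exists t, subtree T p = Some t /\ rkN (label t) = 1.
Proof. by move=> /(_ 0 erefl); rewrite take0 cats0. Qed.

Lemma rank1_path_end T p r :
  rank1_path T p r -> exists t, subtree T (p ++ r) = Some t /\ rkN (label t) = 1.
Proof. by move=> /(_ (size r) (leqnn _)); rewrite take_size. Qed.

Lemma pump2_rank1_path T (v v' : seq bool) :
  pump2 T v v' -> exists q, v' = v ++ q /\ rank1_path T v q.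
Proof.
move=> [tv [_ [Hv [_ [_ [_ [_ [Hr [q [tv0 [_ [-> [Hv0 Hk]]]]]]]]]]]]].
exists q; split=> // k /Hk [t [Ht rt]]; exists t; split=> //.
by rewrite rt; move: Hv0; rewrite Hv => -[<-].
Qed.

Lemma rkN_le1 (A : nt G) : rkN A <= 1.
Proof. by case: HG. Qed.

Lemma rkw_yield t : valid_tree t -> rkw (yield t) = rkN (label t).
Proof.
have [_ [Hstart Hrules]] := HG.
elim: t => [A r|A r tl IHl tr IHr] /=.
  case=> Hp; have := Hrules _ Hp; case: r Hp => //=.
  - by move=> A' a _ Ha <-; case: a Ha => [a|] /= ->.
  - by move=> _ _ ->; rewrite Hstart.
case=> Hp [vl [vr Hr]]; have := Hrules _ Hp.
case: r Hp Hr => //= A' B C _ [-> [-> ->]].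
  by move=> [-> _]; rewrite rkw_cat IHl // IHr.
move=> [HB [HC _]]; have := IHl vl; rewrite HB => /rkw1_split [l [r [-> Hl Hr]]].
by rewrite subst1_sep // !rkw_cat /= Hl Hr IHr // HC addn0.
Qed.

Lemma valid_span_shape t s : valid_span t s ->
  span_wf s /\ (rkN (label t) = 1 \/ rkN (label t) = 0 /\ flat s).
Proof. by case: s => [[[a b] c] d] [_]; rewrite /yield_span /span_wf /flat; lia. Qed.

Lemma derivation_valid_span T w : derivation T w ->
  valid_span T (0, size (yield T), size (yield T), size (yield T)).
Proof.
have [_ [Hstart _]] := HG; move=> [Hval [Hlab _]]; split=> //.
by rewrite /yield_span Hlab Hstart /span_wf; lia.
Qed.

(* lia matches its atoms up to syntactic equality only; [set] identifies the
   occurrences of these measures up to conversion. *)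
Ltac abstract_yield_measures := repeat match goal with
  | H : context [size (yield ?t)] |- _ => let z := fresh "z" in set z := size (yield t) in H *
  | H : context [pre (yield ?t)] |- _ => let z := fresh "p" in set z := pre (yield t) in H *
  | H : context [post (yield ?t)] |- _ => let z := fresh "q" in set z := post (yield t) in H *
  | |- context [size (yield ?t)] => let z := fresh "z" in set z := size (yield t)
  | |- context [pre (yield ?t)] => let z := fresh "p" in set z := pre (yield t)
  | |- context [post (yield ?t)] => let z := fresh "q" in set z := post (yield t)
  end.

Ltac solve_child_spans :=
  rewrite /yield_span /child_span /span_wf /within_hull /nested /within_left
    /within_right /within_gap /precedes /=;
  (split; [split|]); abstract_yield_measures; lia.

Lemma valid_child_spans (A : nt G) (r : rule Sigma (nt G)) tl tr s s1 s2 :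
  valid_span (Node A r tl tr) s -> child_spans r tl tr s = (s1, s2) ->
  [/\ valid_span tl s1, valid_span tr s2,
      child_span (rkN A) (rkN (label tl)) s s1 & child_span (rkN A) (rkN (label tr)) s s2] /\
  (precedes s1 s2 \/ within_gap s1 s2) /\
  (rkN (label tl) = 1 -> rkN (label tr) = 1 -> within_gap s1 s2).
Proof.
move=> [[Hp [vl [vr Hr]]] Hs] Hcs.
suff: [/\ yield_span tl s1, yield_span tr s2,
      child_span (rkN A) (rkN (label tl)) s s1 & child_span (rkN A) (rkN (label tr)) s s2] /\
  (precedes s1 s2 \/ within_gap s1 s2) /\
  (rkN (label tl) = 1 -> rkN (label tr) = 1 -> within_gap s1 s2).
  by case=> -[*]; split.
have [_ [_ Hrules]] := HG.
have Bl := rkN_le1 (label tl); have Br := rkN_le1 (label tr); have BA := rkN_le1 A.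
have yl := rkw_yield vl; have yr := rkw_yield vr.
have := Hrules _ Hp; case: s Hs Hcs => [[[a1 b1] a2] b2] Hs Hcs.
case: r Hp Hr Hs Hcs => //= A' B C _ [-> [-> ->]] Hs Hcs.
{ move=> [Hrk _].
  have [hB|hB] : rkN (label tl) = 0 \/ rkN (label tl) = 1 by lia.
  all: have [hC|hC] : rkN (label tr) = 0 \/ rkN (label tr) = 1 by lia.
  all: move: Hcs; rewrite /child_spans hB ?hC /= => -[<- <-].
  all: rewrite ?hB ?hC in yl yr; rewrite ?size_cat in Hs.
  all: try rewrite (pre_cat1 _ yl) in Hs; try rewrite (pre_cat0 _ yl) in Hs.
  all: try rewrite (post_cat1 yl yr) in Hs; try rewrite (post_cat0 yl yr) in Hs.
  all: try have := size_pre_post yl; try have := size_pre_post yr.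
  all: solve_child_spans. }
{ move=> [hB [Hrk _]].
  have [hC|hC] : rkN (label tr) = 0 \/ rkN (label tr) = 1 by lia.
  all: move: Hcs; rewrite /child_spans hB ?hC /= => -[<- <-].
  all: rewrite ?hB ?hC in yl yr.
  all: try rewrite (pre_subst1 yl yr) in Hs; try rewrite (post_subst1 yl yr) in Hs.
  all: try rewrite (size_subst1 _ yl) in Hs.
  all: try have := size_pre_post yl; try have := size_pre_post yr.
  all: solve_child_spans. }
Qed.

Lemma subtree_valid_span t s p t' :
  valid_span t s -> subtree t p = Some t' ->
  valid_span t' (span_at t s p) /\ desc_span (rkN (label t)) s (span_at t s p).
Proof.
elim: p t s => [|b p IH] [A r|A r tl tr] s Hs //= => [[<-]|[<-]|];
  try by split=> //; case: s Hs => [[[? ?] ?] ?] /valid_span_shape;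
    rewrite /span_wf /desc_span /within_hull /within_left /within_right /nested; lia.
case E: (child_spans r tl tr s) => [s1 s2] /=.
have [[I1 I2 C1 C2] _] := valid_child_spans Hs E.
case: b => Hsub.
  have [Ht Hr] := IH _ _ I2 Hsub; split=> //; exact: child_desc_span C2 (rkN_le1 _) Hr.
have [Ht Hr] := IH _ _ I1 Hsub; split=> //; exact: child_desc_span C1 (rkN_le1 _) Hr.
Qed.

Lemma rank1_path_nested t s p :
  valid_span t s -> rank1_path t [::] p -> nested s (span_at t s p).
Proof.
elim: p t s => [|b p IH] t s Hs Hpath.
  have [Hwf _] := valid_span_shape Hs; rewrite span_at_nil.
  by case: s {Hs} Hwf => [[[? ?] ?] ?]; rewrite /span_wf /nested; lia.
have [t0 [/=]] := Hpath 0 erefl; rewrite subtree_nil => -[<-] rt.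
case: t Hs Hpath rt => [A r|A r tl tr] Hs Hpath rt; first by have [? []] := Hpath 1 erefl.
have [_ Hpath'] := rank1_path_cat (r1 := [:: b]) Hpath.
have [X [HX rX]] := Hpath 1 erefl.
case E: (child_spans r tl tr s) => [s1 s2] /=; rewrite E.
have [[I1 I2 [_ [C1 _]] [_ [C2 _]]] _] := valid_child_spans Hs E.
case: b Hpath Hpath' HX => /= _ Hpath'; rewrite take0 subtree_nil => -[EX]; rewrite -EX in rX.
  exact: nested_trans (C2 rt rX) (IH _ _ I2 Hpath').
exact: nested_trans (C1 rt rX) (IH _ _ I1 Hpath').
Qed.

Lemma sibling_subtrees_separated t s b p q tp tq :
  valid_span t s -> subtree t (b :: p) = Some tp -> subtree t (~~ b :: q) = Some tq ->
  separated (span_at t s (b :: p)) (span_at t s (~~ b :: q)).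
Proof.
case: t => // A r tl tr Hs /=.
case E: (child_spans r tl tr s) => [s1 s2].
have [[I1 I2 _ _] [Hord _]] := valid_child_spans Hs E.
have [w1 f1] := valid_span_shape I1; have [w2 f2] := valid_span_shape I2.
have sep_children pl pr tl' tr' : subtree tl pl = Some tl' -> subtree tr pr = Some tr' ->
    separated (span_at tl s1 pl) (span_at tr s2 pr).
  move=> Hl Hr; have [Il Rl] := subtree_valid_span I1 Hl; have [Ir Rr] := subtree_valid_span I2 Hr.
  have [wl _] := valid_span_shape Il; have [wr _] := valid_span_shape Ir.
  exact: desc_span_separated w1 w2 wl wr f1 f2 Hord Rl Rr.
case: b => /= Hp Hq; last exact: sep_children Hp Hq.
by apply/separated_sym; apply: sep_children Hq Hp.
Qed.

Lemma sibling_rank1_paths_gap t s b p q :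
  valid_span t s -> rank1_path t [::] (b :: p) -> rank1_path t [::] (~~ b :: q) ->
  within_gap (span_at t s (b :: p)) (span_at t s (~~ b :: q)) \/
  within_gap (span_at t s (~~ b :: q)) (span_at t s (b :: p)).
Proof.
move=> Hs HP HQ; have [X [HX rX]] := HP 1 erefl; have [Y [HY rY]] := HQ 1 erefl.
case: t Hs HP HQ HX HY => // A r tl tr Hs HP HQ.
rewrite /= !take0 !subtree_nil => -[EX] [EY].
have [_ HP'] := rank1_path_cat (r1 := [:: b]) HP.
have [_ HQ'] := rank1_path_cat (r1 := [:: ~~ b]) HQ.
case E: (child_spans r tl tr s) => [s1 s2] /=.
have [[I1 I2 _ _] [_ Hgap]] := valid_child_spans Hs E.
case: b {HP HQ} HP' HQ' EX EY => /= HP' HQ' EX EY; subst X Y.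
  by right; apply: nested_within_gap (Hgap rY rX) (rank1_path_nested I1 HQ')
    (rank1_path_nested I2 HP').
by left; apply: nested_within_gap (Hgap rX rY) (rank1_path_nested I1 HP')
  (rank1_path_nested I2 HQ').
Qed.

End TreeSpans.

Section RootedSpans.
Variables (Sigma : finType) (G : grammar Sigma) (T : tree Sigma (nt G)) (s0 : span).
Hypotheses (HG : cnf G) (HT : valid_span T s0).
Local Notation sp := (span_at T s0).

Lemma valid_span_at p t : subtree T p = Some t -> valid_span t (sp p).
Proof. by move=> Hp; have [] := subtree_valid_span HG HT Hp. Qed.

Lemma desc_span_at p r t t' :
  subtree T p = Some t -> subtree T (p ++ r) = Some t' ->
  desc_span (rkN (label t)) (sp p) (sp (p ++ r)).
Proof.
move=> Hp; rewrite subtree_cat Hp (span_at_cat _ _ Hp) => Hr.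
by have [] := subtree_valid_span HG (valid_span_at Hp) Hr.
Qed.

Lemma pump_spans_at p q : rank1_path T p q -> pump_spans (sp p) (sp (p ++ q)).
Proof.
move=> HP; have [t [Hp _]] := rank1_path_root HP; have [t' [Hq _]] := rank1_path_end HP.
have [Hwf _] := valid_span_shape (valid_span_at Hp).
have [Hwf' _] := valid_span_shape (valid_span_at Hq).
split=> //; rewrite (span_at_cat _ _ Hp).
exact: (rank1_path_nested HG (valid_span_at Hp) (rank1_path_sub Hp HP)).
Qed.

Lemma separated_at z b p q tp tq :
  subtree T (z ++ b :: p) = Some tp -> subtree T (z ++ ~~ b :: q) = Some tq ->
  separated (sp (z ++ b :: p)) (sp (z ++ ~~ b :: q)).
Proof.
rewrite !subtree_cat; case Hz: (subtree T z) => [tz|] // Hp Hq.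
rewrite !(span_at_cat _ _ Hz).
exact: (sibling_subtrees_separated HG (valid_span_at Hz) Hp Hq).
Qed.

Lemma rank1_paths_comparable p q r :
  rank1_path T p q -> rank1_path T p r ->
  [\/ nested (sp (p ++ q)) (sp (p ++ r)), nested (sp (p ++ r)) (sp (p ++ q)),
       within_gap (sp (p ++ q)) (sp (p ++ r)) | within_gap (sp (p ++ r)) (sp (p ++ q))].
Proof.
move=> HQ HR; case: (address_cases q r) => [[r' Er]|[q' Eq]|[z [b [q1 [r1 [Eq Er]]]]]].
- by subst r; apply: Or41; rewrite catA; case: (pump_spans_at (rank1_path_cat HR).2).
- by subst q; apply: Or42; rewrite catA; case: (pump_spans_at (rank1_path_cat HQ).2).
subst q r; rewrite !catA.
have [HQz HRz] := ((rank1_path_cat HQ).2, (rank1_path_cat HR).2).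
have [t [Hz _]] := rank1_path_root HQz; rewrite !(span_at_cat _ _ Hz).
case: (sibling_rank1_paths_gap HG (valid_span_at Hz) (rank1_path_sub Hz HQz)
  (rank1_path_sub Hz HRz)) => H; [exact: Or43 | exact: Or44].
Qed.

Lemma cases12_nested_pumps (v q u q' r : seq bool) :
  rank1_path T v q -> rank1_path T u q' -> u = v ++ r ->
  cases12_sym (sp v) (sp (v ++ q)) (sp u) (sp (u ++ q')).
Proof.
move=> HPv HPu Eu.
have Pv := pump_spans_at HPv; have Pu := pump_spans_at HPu.
have [tv [Htv rv]] := rank1_path_root HPv; have [tv' [Htv' rv']] := rank1_path_end HPv.
have [tu [Htu _]] := rank1_path_root HPu.
case: (address_cases (v ++ q) u) => [[r2 Eu2]|[r2 Ev']|[z [b [p1 [q1 [Ev' Eu2]]]]]].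
- apply: cases12_below_inner Pv Pu _.
  by rewrite -rv' Eu2; apply: desc_span_at Htv' _; rewrite -Eu2; exact: Htu.
- have Eq : q = r ++ r2.
    by move/eqP: Ev'; rewrite Eu -catA eqseq_cat // eqxx => /eqP.
  subst u q; have [HPvr HPr2] := rank1_path_cat HPv; rewrite catA in Pv *.
  apply: cases12_between Pv Pu _ _ (rank1_paths_comparable HPu HPr2).
    by case: (pump_spans_at HPvr).
  by case: (pump_spans_at HPr2).
- apply: cases12_beside_inner Pv Pu _ _.
    by rewrite Ev' in Htv' *; rewrite Eu2 in Htu *; exact: separated_at Htv' Htu.
  by rewrite -rv Eu; apply: desc_span_at Htv _; rewrite -Eu; exact: Htu.
Qed.

End RootedSpans.

Theorem lemma9 (Sigma : finType) (G : grammar Sigma) (w : seq Sigma)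
  (T : tree Sigma (nt G)) (v v' u u' : seq bool)
  (i1 j1 k1 l1 i2 j2 k2 l2 i1' j1' k1' l1' i2' j2' k2' l2' : nat) :
  cnf G -> derivation T w ->
  pump2 T v v' -> pump2 T u u' ->
  constituent T v = (i1, l1, i2, l2) -> constituent T v' = (j1, k1, j2, k2) ->
  constituent T u = (i1', l1', i2', l2') -> constituent T u' = (j1', k1', j2', k2') ->
  cases12 i1 j1 k1 l1 i2 j2 k2 l2 i1' j1' k1' l1' i2' j2' k2' l2' \/
  cases12 i1' j1' k1' l1' i2' j2' k2' l2' i1 j1 k1 l1 i2 j2 k2 l2.
Proof.
move=> HG /(derivation_valid_span HG) HT.
move=> /pump2_rank1_path [q [-> HPv]] /pump2_rank1_path [q' [-> HPu]].
rewrite /constituent; set s0 := (0, _, _, _) in HT * => Sv Sv' Su Su'.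
suff : cases12_sym (span_at T s0 v) (span_at T s0 (v ++ q))
                   (span_at T s0 u) (span_at T s0 (u ++ q')) by rewrite Sv Sv' Su Su'.
case: (address_cases v u) => [[r Eu]|[r Ev]|[z [b [p1 [q1 [Ev Eu]]]]]].
- exact: (cases12_nested_pumps HG HT HPv HPu Eu).
- exact/cases12_symC/(cases12_nested_pumps HG HT HPu HPv Ev).
have [tv [Htv _]] := rank1_path_root HPv; have [tu [Htu _]] := rank1_path_root HPu.
apply: cases12_separated (pump_spans_at HG HT HPv) (pump_spans_at HG HT HPu) _.
by rewrite Ev in Htv *; rewrite Eu in Htu *; exact: (separated_at HG HT Htv Htu).
Qed.
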